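(* Let $U\in C([0,1])\cap C^1((0,1])\cap C^2((0,1))$ satisfy $U''>0$ on $(0,1)$, $\lim_{h\downarrow0}U'(h)=-\infty$, $r\mapsto rU''(r)$ non-decreasing on $(0,1)$, and $U(0)=U(1)=0$. Let $D>0$ and $R\in(1/2,1)$ satisfy $U'(R)-U'(1-R)=D$. Then the function $r\mapsto Dr-U(r)-U(1-r)$ is strictly increasing on $[0,R]$, and for every $r\in(0,R]$, \[-U(r)-U(1-r)\le -rU'(r)+r\sup_{\rho\in(0,R]}\big(U'(1-\rho)+\rho U''(\rho)\big).\] *)

From Stdlib Require Import Reals.
From Coquelicot Require Import Coquelicot.
Open Scope R_scope.

Definition cont_on_closed (U : R -> R) (a b : R) : Prop :=
  forall x, a <= x <= b ->
    filterlim U (within (fun y => a <= y <= b) (locally x)) (locally (U x)).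

Definition C1_0_1 (U : R -> R) : Prop :=
  (forall x, 0 < x < 1 -> ex_derive U x) /\
  (forall x, 0 < x < 1 -> continuous (Derive U) x) /\
  exists d1 : R,
    filterlim (fun h => (U (1 + h) - U 1) / h) (at_left 0) (locally d1) /\
    filterlim (Derive U) (at_left 1) (locally d1).

Definition C2_0_1 (U : R -> R) : Prop :=
  forall x, 0 < x < 1 ->
    ex_derive U x /\ ex_derive (Derive U) x /\
    continuous (Derive (Derive U)) x.

From Stdlib Require Import Reals Lra.
From Coquelicot Require Import Coquelicot.
Open Scope R_scope.

(* Let g_c(x) = c x - U(x) - U(1-x) ([tilted_energy c]) and
   h(x) = -U(x) - U(1-x) + x U'(x) ([tangent_energy]).  Since U(0) = U(1) = 0 and U is
   continuous on [0,1], g_c(x) -> 0 as x -> 0+.  As U'' > 0, U' is strictly increasing,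
   so g_D' = (U'(R) - U'(x)) + (U'(1-x) - U'(1-R)) > 0 on (0,R), and right continuity
   at 0 extends the strict monotonicity of g_D to [0,R].
   Next h' = U'(1-x) + x U''(x) is at most the supremum s, so for 0 < e < r the mean
   value theorem and U'(e) <= U'(r) give h(r) - r s <= g_{U'(r) - s}(e); letting
   e -> 0+ yields h(r) <= r s. *)

Lemma is_derive_pos_lt (f df : R -> R) (a b : R) :
  a < b -> (forall x, a <= x <= b -> is_derive f x (df x)) ->
  (forall x, a < x < b -> 0 < df x) -> f a < f b.
Proof.
  intros Hab Hf Hdf.
  destruct (MVT_cor2 f df a b Hab) as [c [Hc Hacb]].
  - intros c Hc. apply is_derive_Reals, Hf, Hc.
  - assert (0 < df c * (b - a)) by (apply Rmult_lt_0_compat; [apply Hdf, Hacb | lra]).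
    lra.
Qed.

Lemma is_derive_le_increment (f df : R -> R) (a b M : R) :
  a < b -> (forall x, a <= x <= b -> is_derive f x (df x)) ->
  (forall x, a < x < b -> df x <= M) -> f b - f a <= M * (b - a).
Proof.
  intros Hab Hf Hdf.
  destruct (MVT_cor2 f df a b Hab) as [c [Hc Hacb]].
  - intros c Hc. apply is_derive_Reals, Hf, Hc.
  - rewrite Hc. apply Rmult_le_compat_r; [lra | apply Hdf, Hacb].
Qed.

Lemma filterlim_Rminus {T : Type} {F : (T -> Prop) -> Prop} {FF : Filter F}
  (f g : T -> R) (a b : R) :
  filterlim f F (locally a) -> filterlim g F (locally b) ->
  filterlim (fun x => f x - g x) F (locally (a - b)).
Proof.
  intros Hf Hg.
  exact (filterlim_comp_2 f (fun x => opp (g x)) plus Hf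
           (filterlim_comp _ _ _ g opp _ _ _ Hg (filterlim_opp b)) (filterlim_plus a (opp b))).
Qed.

Lemma filterlim_reflect_at_right (c a : R) :
  filterlim (fun x => c - x) (at_right a) (at_left (c - a)).
Proof.
  intros P [eps HP]. exists eps. intros y Hy Hay. apply HP.
  - change (Rabs (c - y - (c - a)) < eps).
    replace (c - y - (c - a)) with (- (y - a)) by ring.
    rewrite Rabs_Ropp. exact Hy.
  - lra.
Qed.

Lemma at_right_limit_le (f g : R -> R) (a b lf lg : R) :
  a < b -> (forall x, a < x < b -> f x <= g x) ->
  filterlim f (at_right a) (locally lf) -> filterlim g (at_right a) (locally lg) ->
  lf <= lg.
Proof.
  intros Hab Hfg Hf Hg.
  assert (Hev : locally a (fun x => a < x -> f x <= g x)).
  { generalize (open_lt b a Hab). apply filter_imp.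
    intros x Hxb Hax. apply Hfg. lra. }
  exact (filterlim_le (F := at_right a) f g lf lg Hev Hf Hg).
Qed.

Lemma cont_on_closed_at_right (U : R -> R) (a b : R) :
  a < b -> cont_on_closed U a b -> filterlim U (at_right a) (locally (U a)).
Proof.
  intros Hab HU. apply (filterlim_filter_le_1 (F := within (fun y => a <= y <= b) (locally a))).
  - intros P HP. unfold at_right, within in *.
    generalize (filter_and _ _ HP (open_lt b a Hab)). apply filter_imp.
    intros y [HPy Hyb] Hay. apply HPy. lra.
  - apply HU. lra.
Qed.

Lemma cont_on_closed_at_left (U : R -> R) (a b : R) :
  a < b -> cont_on_closed U a b -> filterlim U (at_left b) (locally (U b)).
Proof.
  intros Hab HU. apply (filterlim_filter_le_1 (F := within (fun y => a <= y <= b) (locally b))).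
  - intros P HP. unfold at_left, within in *.
    generalize (filter_and _ _ HP (open_gt a b Hab)). apply filter_imp.
    intros y [HPy Hay] Hyb. apply HPy. lra.
  - apply HU. lra.
Qed.

Lemma Rbar_le_plus_mult_Lub_Rbar (E : R -> Prop) (x a r : R) :
  0 < r -> (exists y, E y) ->
  (forall s, (forall y, E y -> y <= s) -> x <= a + r * s) ->
  Rbar_le x (Rbar_plus a (Rbar_mult r (Lub_Rbar E))).
Proof.
  intros Hr [y Ey] Hx.
  destruct (Lub_Rbar_correct E) as [Hub _].
  destruct (Lub_Rbar E) as [s | |].
  - apply Hx. intros z Ez. exact (Hub z Ez).
  - rewrite (is_Rbar_mult_unique _ _ _
      (is_Rbar_mult_sym _ _ _ (is_Rbar_mult_p_infty_pos r Hr))).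
    exact I.
  - destruct (Hub y Ey).
Qed.

Section Convex_energy.

Variable U : R -> R.
Hypothesis U_cont : cont_on_closed U 0 1.
Hypothesis U_C2 : C2_0_1 U.
Hypothesis U''_pos : forall x, 0 < x < 1 -> Derive (Derive U) x > 0.
Hypothesis U0 : U 0 = 0.
Hypothesis U1 : U 1 = 0.

Definition tilted_energy (c x : R) : R := c * x - U x - U (1 - x).

Definition tangent_energy (x : R) : R := - U x - U (1 - x) + x * Derive U x.

Lemma Derive_U_lt (x y : R) : 0 < x -> x < y -> y < 1 -> Derive U x < Derive U y.
Proof.
  intros Hx Hxy Hy. apply (is_derive_pos_lt _ (Derive (Derive U))); [exact Hxy | |].
  - intros c Hc. apply Derive_correct, (U_C2 c). lra.
  - intros c Hc. apply U''_pos. lra.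
Qed.

Lemma is_derive_tilted_energy (c x : R) : 0 < x < 1 ->
  is_derive (tilted_energy c) x (c - Derive U x + Derive U (1 - x)).
Proof.
  intros Hx. unfold tilted_energy. auto_derive; replace (1 + - x) with (1 - x) by ring.
  - repeat split; apply U_C2; lra.
  - change (fun y => U y) with U. ring.
Qed.

Lemma is_derive_tangent_energy (x : R) : 0 < x < 1 ->
  is_derive tangent_energy x (Derive U (1 - x) + x * Derive (Derive U) x).
Proof.
  intros Hx. unfold tangent_energy. auto_derive; replace (1 + - x) with (1 - x) by ring.
  - repeat split; apply U_C2; lra.
  - change (fun y => U y) with U. change (fun y => Derive U y) with (Derive U). ring.
Qed.

Lemma tilted_energy_at_right_0 (c : R) :
  filterlim (tilted_energy c) (at_right 0) (locally 0).
Proof.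
  assert (Hlin : filterlim (fun x => c * x) (at_right 0) (locally (c * 0))).
  { apply (filterlim_filter_le_1 (F := locally 0)); [apply filter_le_within |].
    exact (filterlim_scal_r c 0). }
  assert (Hrefl : filterlim (fun x => U (1 - x)) (at_right 0) (locally (U (1 - 0)))).
  { apply (filterlim_comp _ _ _ _ _ _ _ _ (filterlim_reflect_at_right 1 0)).
    rewrite Rminus_0_r. exact (cont_on_closed_at_left U 0 1 Rlt_0_1 U_cont). }
  assert (Hlim := filterlim_Rminus _ _ _ _
    (filterlim_Rminus _ _ _ _ Hlin (cont_on_closed_at_right U 0 1 Rlt_0_1 U_cont)) Hrefl).
  replace (c * 0 - U 0 - U (1 - 0)) with 0 in Hlim by (rewrite U0, (Rminus_0_r 1), U1; ring).
  exact Hlim.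
Qed.

Lemma tilted_energy_strict_incr (D Rr : R) :
  Rr < 1 -> Derive U Rr - Derive U (1 - Rr) = D ->
  forall r s, 0 <= r -> r < s -> s <= Rr -> tilted_energy D r < tilted_energy D s.
Proof.
  intros HR HD.
  assert (Hpos : forall r s, 0 < r -> r < s -> s <= Rr ->
            tilted_energy D r < tilted_energy D s).
  { intros r s Hr Hrs Hs.
    apply (is_derive_pos_lt _ (fun x => D - Derive U x + Derive U (1 - x))); [exact Hrs | |].
    - intros x Hx. apply is_derive_tilted_energy. lra.
    - intros x Hx.
      assert (Derive U x < Derive U Rr) by (apply Derive_U_lt; lra).
      assert (Derive U (1 - Rr) < Derive U (1 - x)) by (apply Derive_U_lt; lra).
      lra. }
  intros r s Hr Hrs Hs.
  destruct (Rle_lt_or_eq_dec 0 r Hr) as [Hr0 | <-]; [now apply Hpos |].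
  apply Rle_lt_trans with (tilted_energy D (s / 2)); [| apply Hpos; lra].
  replace (tilted_energy D 0) with 0
    by (unfold tilted_energy; rewrite U0, (Rminus_0_r 1), U1; ring).
  apply (at_right_limit_le (tilted_energy D) (fun _ => tilted_energy D (s / 2)) 0 (s / 2));
    [lra | | apply tilted_energy_at_right_0 | apply filterlim_const].
  intros x Hx. apply Rlt_le, Hpos; lra.
Qed.

Lemma tangent_energy_le (Rr s r : R) : Rr < 1 ->
  (forall rho, 0 < rho <= Rr -> Derive U (1 - rho) + rho * Derive (Derive U) rho <= s) ->
  0 < r <= Rr -> tangent_energy r <= r * s.
Proof.
  intros HR Hs Hr.
  assert (Hgap : forall e, 0 < e < r ->
            tangent_energy r - r * s <= tilted_energy (Derive U r - s) e).
  { intros e He.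
    assert (Hh : tangent_energy r - tangent_energy e <= s * (r - e)).
    { apply (is_derive_le_increment _ (fun x => Derive U (1 - x) + x * Derive (Derive U) x));
        [lra | |].
      - intros x Hx. apply is_derive_tangent_energy. lra.
      - intros x Hx. apply Hs. lra. }
    assert (e * Derive U e <= e * Derive U r).
    { apply Rmult_le_compat_l; [lra |]. apply Rlt_le, Derive_U_lt; lra. }
    unfold tangent_energy, tilted_energy in *. lra. }
  assert (tangent_energy r - r * s <= 0).
  { apply (at_right_limit_le (fun _ => tangent_energy r - r * s)
             (tilted_energy (Derive U r - s)) 0 r); [lra | exact Hgap | |].
    - apply filterlim_const.
    - apply tilted_energy_at_right_0. }
  lra.
Qed.

End Convex_energy.

Theorem lemma3p3 (U : R -> R) (D Rr : R)
  (HU0 : cont_on_closed U 0 1)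
  (HU1 : C1_0_1 U)
  (HU2 : C2_0_1 U)
  (Hconv : forall x, 0 < x < 1 -> Derive (Derive U) x > 0)
  (Hlim : filterlim (Derive U) (at_right 0) (Rbar_locally m_infty))
  (Hmon : forall r s, 0 < r -> r <= s -> s < 1 ->
            r * Derive (Derive U) r <= s * Derive (Derive U) s)
  (Hz0 : U 0 = 0) (Hz1 : U 1 = 0)
  (HD : D > 0) (HR : 1/2 < Rr < 1)
  (HDR : Derive U Rr - Derive U (1 - Rr) = D) :
  (forall r s, 0 <= r -> r < s -> s <= Rr ->
     D * r - U r - U (1 - r) < D * s - U s - U (1 - s)) /\
  (forall r, 0 < r <= Rr ->
     Rbar_le (Finite (- U r - U (1 - r)))
       (Rbar_plus (Finite (- r * Derive U r))
          (Rbar_mult (Finite r)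
             (Lub_Rbar (fun y => exists rho, 0 < rho <= Rr /\
                 y = Derive U (1 - rho) + rho * Derive (Derive U) rho))))).
Proof.
  split.
  - exact (tilted_energy_strict_incr U HU0 HU2 Hconv Hz0 Hz1 D Rr (proj2 HR) HDR).
  - intros r Hr. apply Rbar_le_plus_mult_Lub_Rbar; [lra | |].
    + eexists. exists Rr. split; [lra | reflexivity].
    + intros s Hs.
      assert (Hh : tangent_energy U r <= r * s).
      { apply (tangent_energy_le U HU0 HU2 Hconv Hz0 Hz1 Rr); [lra | | exact Hr].
        intros rho Hrho. apply Hs. exists rho. split; [exact Hrho | reflexivity]. }
      unfold tangent_energy in Hh. lra.
Qed.
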